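(* Let $n\ge 1$ be an integer and let $\mathbb{F}_q$ be a finite field with $q$ elements. Let $B\subset\mathbb{F}_q^n$ be a Nikodym set, i.e. for every $x\in\mathbb{F}_q^n\setminus B$ there exists a line $L\subset\mathbb{F}_q^n$ such that $L\cap(\mathbb{F}_q^n\setminus B)=\{x\}$. Then \[|B|\ge \binom{n+q-2}{n}.\]
   Context: A line in $\mathbb{F}_q^n$ is a set of the form $\{a+tb: t\in\mathbb{F}_q\}$ with $a,b\in\mathbb{F}_q^n$, $b\neq 0$. *)

From HB Require Import structures.
From mathcomp Require Import all_boot all_order all_algebra all_field.
Set Implicit Arguments. Unset Strict Implicit. Unset Printing Implicit Defensive.
Import GRing.Theory.
Local Open Scope ring_scope.

(* The line {a + t b : t in F} (meaningful as a line when b != 0). *)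
Definition line (F : finFieldType) (n : nat) (a b : 'rV[F]_n) : {set 'rV[F]_n} :=
  [set a + t *: b | t : F].

Definition nikodym (F : finFieldType) (n : nat) (B : {set 'rV[F]_n}) : Prop :=
  forall x : 'rV[F]_n, x \notin B ->
    exists a b : 'rV[F]_n, b != 0 /\ line a b :&: ~: B = [set x].

From mathcomp Require Import all_boot all_order all_algebra all_field all_fingroup all_solvable.
From mathcomp Require Import zify.
Set Implicit Arguments. Unset Strict Implicit. Unset Printing Implicit Defensive.
Import GRing.Theory.
Local Open Scope ring_scope.

(* Polynomial method.  The monomials x^e with total degree at most q - 2 span a
   space of dimension C(n + q - 2, n), so if |B| were smaller some nontrivial
   combination f of them would vanish on B.  On any line f is a univariate
   polynomial of degree at most q - 2; on the Nikodym line through x outside B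
   it vanishes at the q - 1 points other than x, hence everywhere, so f x = 0.
   Thus f vanishes on all of F_q^n.  But monomials whose exponents are all below
   q - 1 are linearly independent as functions: pairing x^e with x^(q-1-e') and
   summing over F_q^n gives (-1)^n or 0 according as e = e', because
   sum_t t^m is -1 or 0 according as q - 1 divides m > 0. *)

Section PowerSums.
Variable F : finFieldType.

Lemma card_finField_pred_gt0 : (0 < #|F|.-1)%N.
Proof. by rewrite -subn1 subn_gt0 finNzRing_gt1. Qed.

Lemma natr_card_finField : #|F|%:R = 0 :> F.
Proof. by rewrite -cardsT -FinRing.zmodXgE expg_cardG // inE. Qed.

Lemma expf_card_pred (t : F) : t != 0 -> t ^+ #|F|.-1 = 1.
Proof.
move=> t_neq0; apply: (mulfI t_neq0).
by rewrite mulr1 -exprS prednK ?expf_card // ltnW ?finNzRing_gt1.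
Qed.

Lemma finField_prim_root : exists z : F, #|F|.-1.-primitive_root z.
Proof.
have /hasP[z _ z_prim] : has #|F|.-1.-primitive_root (enum (predC1 (0 : F))).
  apply: has_prim_root; rewrite ?card_finField_pred_gt0 ?enum_uniq //.
    by apply/allP => t; rewrite mem_enum => t_neq0; apply/unity_rootP/expf_card_pred.
  by rewrite -cardE cardC1.
by exists z.
Qed.

Lemma sum_expr_finField e : (0 < e)%N ->
  \sum_(t : F) t ^+ e = if (#|F|.-1 %| e)%N then -1 else 0.
Proof.
move=> e_gt0; case: ifP => [/dvdnP[m def_e] | e_ndvd].
  rewrite (bigD1 0) //= expr0n eqn0Ngt e_gt0 add0r.
  rewrite (eq_bigr (fun _ => 1)) => [|t t_neq0]; last first.
    by rewrite def_e mulnC exprM expf_card_pred ?expr1n.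
  rewrite sumr_const cardC1; apply/eqP.
  by rewrite -addr_eq0 -mulrSr prednK ?natr_card_finField // ltnW ?finNzRing_gt1.
have [z z_prim] := finField_prim_root.
have z_neq0 : z != 0 by rewrite (prim_root_eq0 z_prim) -lt0n card_finField_pred_gt0.
have ze_neq1 : z ^+ e != 1 by rewrite -(prim_order_dvd z_prim) e_ndvd.
set S := \sum_t _.
have S_dil : S = z ^+ e * S.
  by rewrite {1}/S (reindex_inj (mulfI z_neq0)) mulr_sumr; apply: eq_bigr => t _; rewrite exprMn.
apply/eqP; have : (z ^+ e - 1) * S == 0 by rewrite mulrBl mul1r -S_dil subrr.
by rewrite mulf_eq0 subr_eq0 (negbTE ze_neq1).
Qed.

End PowerSums.

Lemma dvdn_add_subn k a b : (a < k)%N -> (b < k)%N -> (k %| a + (k - b))%N = (a == b).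
Proof.
move=> a_lt_k b_lt_k; apply/idP/eqP => [/dvdnP[[|[|m]] def_m] | ->]; [lia | lia | nia |].
by rewrite subnKC ?dvdnn // ltnW.
Qed.

Lemma sum_row_prod (R : comPzSemiRingType) (T : finType) n (g : 'I_n -> T -> R) :
  \sum_(x : 'rV[T]_n) \prod_(i < n) g i (x 0 i) = \prod_(i < n) \sum_(t : T) g i t.
Proof.
rewrite bigA_distr_bigA (reindex (fun f : {ffun 'I_n -> T} => \row_i f i)) /=.
  by apply: eq_bigr => f _; apply: eq_bigr => i _; rewrite mxE.
exists (fun x : 'rV[T]_n => [ffun i => x 0 i]) => [f _ | x _].
  by apply/ffunP => i; rewrite ffunE mxE.
by apply/rowP => i; rewrite mxE ffunE.
Qed.

Definition monomial (R : pzSemiRingType) n (e : 'I_n -> nat) (x : 'rV[R]_n) : R :=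
  \prod_(i < n) x 0 i ^+ e i.

Lemma monomialD (R : comPzSemiRingType) n (e e' : 'I_n -> nat) (x : 'rV[R]_n) :
  monomial e x * monomial e' x = monomial (fun i => e i + e' i)%N x.
Proof. by rewrite /monomial -big_split; apply: eq_bigr => i _; rewrite exprD. Qed.

Section Orthogonality.
Variables (F : finFieldType) (k : nat).
Hypothesis cardF : #|F| = k.+1.

Lemma sum_monomial_dual n (e e' : n.-tuple 'I_k) :
  \sum_(x : 'rV[F]_n) monomial (tnth e) x * monomial (fun i => k - tnth e' i)%N x =
    if e == e' then (-1) ^+ n else 0.
Proof.
under eq_bigr do rewrite monomialD.
rewrite (sum_row_prod (fun i (t : F) => t ^+ (tnth e i + (k - tnth e' i)))).
under eq_bigr => i _.
  have exp_gt0 : (0 < tnth e i + (k - tnth e' i))%N by have := ltn_ord (tnth e' i); lia.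
  rewrite sum_expr_finField // cardF /= dvdn_add_subn //.
  over.
have [-> | neq_ee'] := eqVneq e e'.
  by rewrite (eq_bigr (fun _ => -1)) ?prodr_const ?card_ord // => i _; rewrite eqxx.
have [i neq_i] : exists i, tnth e i != tnth e' i.
  apply/existsP; rewrite -negb_forall; apply: contra neq_ee' => /forallP eq_ee'.
  by apply/eqP/eq_from_tnth => i; apply/eqP.
by rewrite (bigD1 i) //= ifN ?mul0r.
Qed.

Lemma monomial_free n (I : finType) (E : I -> n.-tuple 'I_k) (c : I -> F) :
  injective E -> (forall x, \sum_j c j * monomial (tnth (E j)) x = 0) ->
  forall j, c j = 0.
Proof.
move=> E_inj c_E0 j0.
pose dual := @monomial F n (fun i => k - tnth (E j0) i)%N.
have : \sum_(x : 'rV[F]_n) (\sum_j c j * monomial (tnth (E j)) x) * dual x = 0.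
  by rewrite big1 // => x _; rewrite c_E0 mul0r.
under eq_bigr do rewrite mulr_suml.
rewrite exchange_big /=.
under eq_bigr do rewrite -(eq_bigr _ (fun x _ => mulrA _ _ _)) -mulr_sumr sum_monomial_dual.
rewrite (bigD1 j0) //= eqxx big1 ?addr0 => [|j neq_j]; last first.
  by rewrite (inj_eq E_inj) (negbTE neq_j) mulr0.
by move/eqP; rewrite mulf_eq0 signr_eq0 orbF => /eqP.
Qed.

End Orthogonality.

Definition line_poly (R : comNzRingType) n (e : 'I_n -> nat) (a b : 'rV[R]_n) : {poly R} :=
  \prod_(i < n) ((b 0 i)%:P * 'X + (a 0 i)%:P) ^+ e i.

Lemma size_line_poly (R : comNzRingType) n (e : 'I_n -> nat) (a b : 'rV[R]_n) :
  (size (line_poly e a b) <= (\sum_(i < n) e i).+1)%N.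
Proof.
rewrite /line_poly; elim/big_rec2: _ => [|i s p _ size_p]; first by rewrite size_poly1.
set lin := ((b 0 i)%:P * 'X + (a 0 i)%:P)%R.
have size_lin : (size lin <= 2)%N.
  by rewrite size_MXaddC; case: ifP => // _; rewrite ltnS size_polyC_leq1.
apply: leq_trans (size_polyMleq _ _) _.
have := size_poly_exp_leq lin (e i).
move: (size (lin ^+ e i)) (size lin) size_lin => u v; nia.
Qed.

Lemma horner_line_poly (R : comNzRingType) n (e : 'I_n -> nat) (a b : 'rV[R]_n) t :
  (line_poly e a b).[t] = monomial e (a + t *: b).
Proof.
rewrite /line_poly /monomial horner_prod; apply: eq_bigr => i _.
by rewrite horner_exp !hornerE !mxE addrC mulrC.
Qed.

Lemma exists_lincomb_vanishing (F : fieldType) (T : finType) (B : {set T}) m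
    (f : 'I_m -> T -> F) :
  (#|B| < m)%N -> exists2 c : 'rV[F]_m, c != 0 & {in B, forall x, \sum_j c 0 j * f j x = 0}.
Proof.
move=> ltBm; pose A := \matrix_(j < m, l < #|B|) f j (enum_val l).
have : kermx A != 0.
  by rewrite kermx_eq0 /row_free neq_ltn (leq_ltn_trans (rank_leq_col A) ltBm).
case/rowV0Pn => c /sub_kermxP cA c_neq0; exists c => // x xB.
have /rowP/(_ (enum_rank_in xB x)) := cA; rewrite !mxE => cAx; rewrite -[RHS]cAx.
by apply: eq_bigr => j _; rewrite mxE enum_rankK_in.
Qed.

Lemma line_point_inj (R : fieldType) n (a b : 'rV[R]_n) :
  b != 0 -> injective (fun t : R => a + t *: b).
Proof.
move=> b_neq0 s t /addrI /eqP; rewrite -subr_eq0 -scalerBl scaler_eq0 subr_eq0.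
by rewrite (negbTE b_neq0) orbF => /eqP.
Qed.

Lemma poly_eq0_off_point (F : finFieldType) (p : {poly F}) t0 :
  (size p <= #|F|.-1)%N -> (forall t, t != t0 -> p.[t] = 0) -> p = 0.
Proof.
move=> size_p p_off; apply: (@roots_geq_poly_eq0 _ _ (enum (predC1 t0))).
- by apply/allP => t; rewrite mem_enum => t_neq; apply/eqP/p_off.
- exact: enum_uniq.
- by rewrite -cardE cardC1.
Qed.

Lemma nikodym_vanishing (F : finFieldType) n (B : {set 'rV[F]_n}) (f : 'rV[F]_n -> F) :
  nikodym B -> {in B, forall x, f x = 0} ->
  (forall a b, exists2 p : {poly F}, (size p <= #|F|.-1)%N & forall t, p.[t] = f (a + t *: b)) ->
  forall x, f x = 0.
Proof.
move=> nikB fB0 f_line x; have [xB | xNB] := boolP (x \in B); first exact: fB0.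
have [a [b [b_neq0 lineB]]] := nikB x xNB.
have [p size_p p_f] := f_line a b.
have /imsetP[t0 _ def_x] : x \in line a b.
  by move: (set11 x); rewrite -lineB inE => /andP[].
rewrite def_x -p_f (poly_eq0_off_point (t0 := t0) size_p) ?horner0 // => t t_neq0.
rewrite p_f fB0 //; apply: contraNT t_neq0 => atNB.
have : a + t *: b \in [set x] by rewrite -lineB !inE atNB andbT; apply/imsetP; exists t.
by rewrite inE def_x => /eqP/(line_point_inj b_neq0) ->.
Qed.

Theorem mainTheorem1 (F : finFieldType) (n : nat) (hn : (1 <= n)%N)
  (B : {set 'rV[F]_n}) (hB : nikodym B) :
  ('C(n + #|F| - 2, n) <= #|B|)%N.
Proof.
have [d cardF] : exists d, #|F| = d.+2.
  by exists (#|F| - 2)%N; move: #|F| (finNzRing_gt1 F) => q; lia.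
rewrite cardF (_ : n + d.+2 - 2 = n + d)%N; last by lia.
rewrite -(card_partial_ord_partitions n d).
set M := [set t | _]; rewrite leqNgt; apply/negP => ltBM.
pose E j := tnth (enum_val (A := M) j).
have [c c_neq0 cB0] := exists_lincomb_vanishing (fun j => monomial (E j)) ltBM.
have deg_E j : (\sum_(i < n) E j i <= d)%N.
  by have := enum_valP j; rewrite inE big_tuple.
have c_lincomb0 : forall x, \sum_j c 0 j * monomial (E j) x = 0.
  apply: nikodym_vanishing hB cB0 _ => a b.
  exists (\sum_j c 0 j *: line_poly (E j) a b) => [|t].
    rewrite cardF; apply: leq_trans (size_sum _ _ _) _; apply/bigmax_leqP => j _.
    apply: leq_trans (size_scale_leq _ _) _; apply: leq_trans (size_line_poly _ _ _) _.
    exact: deg_E.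
  by rewrite horner_sum; apply: eq_bigr => j _; rewrite hornerZ horner_line_poly.
have c0 := monomial_free cardF enum_val_inj c_lincomb0.
by move/eqP: c_neq0; apply; apply/rowP => j; rewrite mxE c0.
Qed.
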